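(* Let $\Lambda$ be a row-finite $k$-graph with no sources and let $\alpha$ be an action of $\mathbb{Z}^l$ on $\Lambda$ by automorphisms. Then for $x\in\Lambda^\infty$ and $(p,m)\in\mathbb{N}^k\times\mathbb{N}^l$, the shift map on $(\Lambda\times_\alpha\mathbb{Z}^l)^\infty$ satisfies $\sigma^{(p,m)}(x,\infty)=(\alpha^\infty_{-m}(\sigma^p(x)),\infty)$. Moreover, $\sigma^p\circ\alpha^\infty_{-m}=\alpha^\infty_{-m}\circ\sigma^p$; in particular $\sigma^{(p,m)}(x,\infty)=(\sigma^p(\alpha^\infty_{-m}(x)),\infty)$.
   Context: A $k$-graph is a countable category $\Lambda$ with a functor $d:\Lambda\to\mathbb{N}^k$ with unique factorisation; vertices are degree-$0$ morphisms; row-finite: each $v\Lambda^n$ finite; no sources: each $v\Lambda^n$ nonempty. An automorphism is a bijective degree-preserving functor. $\Lambda\times_\alpha\mathbb{Z}^l$ is the $(k+l)$-graph with morphisms $\Lambda\times\mathbb{N}^l$, degree $(d(\lambda),m)$, $r(\lambda,m)=(r(\lambda),0)$, $s(\lambda,m)=(\alpha_{-m}(s(\lambda)),0)$, $(\mu,m)(\nu,n)=(\mu\alpha_m(\nu),m+n)$. For a $j$-graph $\Gamma$, $\Gamma^\infty$ is the set of degree-preserving functors $x:\Omega_j\to\Gamma$ ($\Omega_j=\{(a,b)\in\mathbb{N}^j\times\mathbb{N}^j:a\le b\}$, $r(a,b)=(a,a)$, $s(a,b)=(b,b)$, $(a,b)(b,c)=(a,c)$, $d(a,b)=b-a$); $\sigma^q(x)$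 is the infinite path with $\sigma^q(x)(0,n)=x(q,q+n)$. For an automorphism $\phi$ of $\Lambda$, $\phi^\infty(x)$ is the infinite path with $\phi^\infty(x)(0,n)=\phi(x(0,n))$. For $x\in\Lambda^\infty$, $(x,\infty)$ denotes the unique infinite path of $\Lambda\times_\alpha\mathbb{Z}^l$ with $(x,\infty)((0,0),(p,0))=(x(0,p),0)$ for all $p\in\mathbb{N}^k$. *)

From mathcomp Require Import all_boot all_order all_algebra.
From Stdlib Require List.
Set Implicit Arguments. Unset Strict Implicit. Unset Printing Implicit Defensive.

Definition Nk (k : nat) := {ffun 'I_k -> nat}.
Definition Zl (l : nat) := {ffun 'I_l -> int}.

Definition Nzero k : Nk k := [ffun => 0%N].
Definition Nadd k (a b : Nk k) : Nk k := [ffun i => (a i + b i)%N].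
Definition Nsub k (a b : Nk k) : Nk k := [ffun i => (a i - b i)%N].
Definition Nle k (a b : Nk k) : bool := [forall i, (a i <= b i)%N].

Definition Zzero l : Zl l := [ffun => 0%R].
Definition Zadd l (a b : Zl l) : Zl l := [ffun i => (a i + b i)%R].
Definition NtoZ l (m : Nk l) : Zl l := [ffun i => ((m i)%:Z)%R].
Definition Nneg l (m : Nk l) : Zl l := [ffun i => (- (m i)%:Z)%R].

(* (p, m) in N^k x N^l viewed as an element of N^(k+l) *)
Definition Njoin k l (p : Nk k) (m : Nk l) : Nk (k + l) :=
  [ffun i => match split i with inl a => p a | inr b => m b end].

(* ---------- raw data of a category with a degree map to N^k ----------
   Single-sorted presentation: objects are the identity morphisms,
   [r f] and [s f] are the identity morphisms at the range and source of f,
   [comp f g] is the composite fg (meaningful only when s f = r g). *)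
Record kdata (k : nat) := KData {
  Mor : Type;
  rg : Mor -> Mor;
  sc : Mor -> Mor;
  comp : Mor -> Mor -> Mor;
  deg : Mor -> Nk k }.
Arguments rg {k} _ _.
Arguments sc {k} _ _.
Arguments comp {k} _ _ _.
Arguments deg {k} _ _.

Definition is_category k (L : kdata k) : Prop :=
  [/\ (forall f, rg L (rg L f) = rg L f /\ sc L (rg L f) = rg L f),
      (forall f, rg L (sc L f) = sc L f /\ sc L (sc L f) = sc L f),
      (forall f, comp L (rg L f) f = f /\ comp L f (sc L f) = f),
      (forall f g, sc L f = rg L g ->
         rg L (comp L f g) = rg L f /\ sc L (comp L f g) = sc L g)
    & (forall f g h, sc L f = rg L g -> sc L g = rg L h ->
         comp L (comp L f g) h = comp L f (comp L g h))].

Definition deg_functor k (L : kdata k) : Prop :=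
  (forall f, deg L (rg L f) = Nzero k) /\
  (forall f g, sc L f = rg L g -> deg L (comp L f g) = Nadd (deg L f) (deg L g)).

Definition unique_factorisation k (L : kdata k) : Prop :=
  forall (lam : Mor L) (m n : Nk k), deg L lam = Nadd m n ->
    exists! mn : Mor L * Mor L,
      [/\ sc L mn.1 = rg L mn.2, deg L mn.1 = m, deg L mn.2 = n
        & lam = comp L mn.1 mn.2].

Definition countable_mor k (L : kdata k) : Prop :=
  exists f : Mor L -> nat, injective f.

Definition is_kgraph k (L : kdata k) : Prop :=
  [/\ countable_mor L, is_category L, deg_functor L & unique_factorisation L].

Definition is_vertex k (L : kdata k) (v : Mor L) : Prop := rg L v = v.

Definition row_finite k (L : kdata k) : Prop :=
  forall (v : Mor L) (n : Nk k), is_vertex v ->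
    exists s : seq (Mor L), forall lam, rg L lam = v -> deg L lam = n -> List.In lam s.

Definition no_sources k (L : kdata k) : Prop :=
  forall (v : Mor L) (n : Nk k), is_vertex v ->
    exists lam, rg L lam = v /\ deg L lam = n.

Definition is_automorphism k (L : kdata k) (phi : Mor L -> Mor L) : Prop :=
  [/\ bijective phi,
      (forall f, deg L (phi f) = deg L f),
      (forall f, phi (rg L f) = rg L (phi f)),
      (forall f, phi (sc L f) = sc L (phi f))
    & (forall f g, sc L f = rg L g -> phi (comp L f g) = comp L (phi f) (phi g))].

Definition is_action k l (L : kdata k) (alpha : Zl l -> Mor L -> Mor L) : Prop :=
  [/\ (forall n, @is_automorphism k L (alpha n)),
      (forall f, alpha (Zzero l) f = f)
    & (forall n1 n2 f, alpha (Zadd n1 n2) f = alpha n1 (alpha n2 f))].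

Definition skew_prod k l (L : kdata k) (alpha : Zl l -> Mor L -> Mor L) : kdata (k + l) :=
  @KData (k + l) (Mor L * Nk l)
    (fun lm => (rg L lm.1, Nzero l))
    (fun lm => (alpha (Nneg lm.2) (sc L lm.1), Nzero l))
    (fun mu nu => (comp L mu.1 (alpha (NtoZ mu.2) nu.1), Nadd mu.2 nu.2))
    (fun lm => Njoin (deg L lm.1) lm.2).

(* ---------- infinite paths ----------
   A degree-preserving functor Omega_j -> Gamma, represented as a function
   x a b = x(a,b), only the values with a <= b being relevant. *)
Definition ipath j (G : kdata j) := Nk j -> Nk j -> Mor G.

Definition is_inf_path j (G : kdata j) (x : ipath G) : Prop :=
  forall a b c : Nk j, Nle a b -> Nle b c ->
    [/\ deg G (x a b) = Nsub b a,
        rg G (x a b) = x a a,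
        sc G (x a b) = x b b
      & x a c = comp G (x a b) (x b c)].

Definition ipeq j (G : kdata j) (x y : ipath G) : Prop :=
  forall a b : Nk j, Nle a b -> x a b = y a b.

Definition shift j (G : kdata j) (q : Nk j) (x : ipath G) : ipath G :=
  fun a b => x (Nadd q a) (Nadd q b).

Definition aut_inf j (G : kdata j) (phi : Mor G -> Mor G) (x : ipath G) : ipath G :=
  fun a b => phi (x a b).

(* y is (x, infty): an infinite path of the skew_prod product with
   y((0,0),(p,0)) = (x(0,p), 0) for all p *)
Definition is_xinf k l (L : kdata k) (alpha : Zl l -> Mor L -> Mor L)
  (x : ipath L) (y : ipath (skew_prod alpha)) : Prop :=
  is_inf_path y /\
  forall p : Nk k,
    y (Njoin (Nzero k) (Nzero l)) (Njoin p (Nzero l)) = (x (Nzero k) p, Nzero l).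

From Pilot Require Import Defs.
From mathcomp Require Import all_boot all_order all_algebra.
Set Implicit Arguments. Unset Strict Implicit. Unset Printing Implicit Defensive.

(* An infinite path [y] of the skew product is determined by its values
   [y((0,0),(b,n))], and the unique factorisation in [Lambda] forces
   [y((a,m),(b,n)) = (alpha_{-m}(x(a,b)), n - m)] when [y = (x, infty)].
   Shifting by [(p,m)] then gives [alpha_{-m}(x(p+a,p+b))], which is the same
   formula for the path [alpha_{-m}^infty(sigma^p x)]; and [sigma^p] commutes
   with [alpha_{-m}^infty] since one reindexes [x] and the other acts on its values. *)

Lemma split_lshift k l (i : 'I_k) : split (lshift l i) = inl i.
Proof. exact: (unsplitK (inl _ i)). Qed.

Lemma split_rshift k l (i : 'I_l) : split (rshift k i) = inr i.
Proof. exact: (unsplitK (inr _ i)). Qed.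

Lemma Njoin_inj k l (u u' : Nk k) (v v' : Nk l) :
  Njoin u v = Njoin u' v' -> u = u' /\ v = v'.
Proof.
move=> E; split; apply/ffunP => i.
  by have := congr1 (fun f : Nk (k + l) => f (lshift l i)) E; rewrite !ffunE split_lshift.
by have := congr1 (fun f : Nk (k + l) => f (rshift k i)) E; rewrite !ffunE split_rshift.
Qed.

Lemma Njoin_split k l (b : Nk (k + l)) :
  exists (b1 : Nk k) (b2 : Nk l), b = Njoin b1 b2.
Proof.
exists [ffun i => b (lshift l i)], [ffun j => b (rshift k j)].
apply/ffunP => i; rewrite !ffunE -{1}(splitK i).
by case: (split i) => j /=; rewrite ffunE.
Qed.

Lemma Nadd_join k l (u u' : Nk k) (v v' : Nk l) :
  Nadd (Njoin u v) (Njoin u' v') = Njoin (Nadd u u') (Nadd v v').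
Proof. by apply/ffunP => i; rewrite !ffunE; case: (split i) => j; rewrite !ffunE. Qed.

Lemma Nsub_join k l (u u' : Nk k) (v v' : Nk l) :
  Nsub (Njoin u v) (Njoin u' v') = Njoin (Nsub u u') (Nsub v v').
Proof. by apply/ffunP => i; rewrite !ffunE; case: (split i) => j; rewrite !ffunE. Qed.

Lemma Nle_join k l (u u' : Nk k) (v v' : Nk l) :
  Nle u u' -> Nle v v' -> Nle (Njoin u v) (Njoin u' v').
Proof.
move=> /forallP le_u /forallP le_v; apply/forallP => i; rewrite !ffunE.
by case: (split i).
Qed.

Lemma Nle_joinE k l (u u' : Nk k) (v v' : Nk l) :
  Nle (Njoin u v) (Njoin u' v') -> Nle u u' /\ Nle v v'.
Proof.
move=> /forallP le_uv; split; apply/forallP => i.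
  by have := le_uv (lshift l i); rewrite !ffunE split_lshift.
by have := le_uv (rshift k i); rewrite !ffunE split_rshift.
Qed.

Lemma Nle0 k (u : Nk k) : Nle (Nzero k) u.
Proof. by apply/forallP => i; rewrite ffunE. Qed.

Lemma Nle_refl k (u : Nk k) : Nle u u.
Proof. exact/forallP. Qed.

Lemma Nle_add2l k (p u v : Nk k) : Nle u v -> Nle (Nadd p u) (Nadd p v).
Proof. by move=> /forallP le_uv; apply/forallP => i; rewrite !ffunE leq_add2l. Qed.

Lemma Nsub_add2l k (p u v : Nk k) : Nsub (Nadd p v) (Nadd p u) = Nsub v u.
Proof. by apply/ffunP => i; rewrite !ffunE subnDl. Qed.

Lemma Nsub0 k (u : Nk k) : Nsub u (Nzero k) = u.
Proof. by apply/ffunP => i; rewrite !ffunE subn0. Qed.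

Lemma Nsubnn k (u : Nk k) : Nsub u u = Nzero k.
Proof. by apply/ffunP => i; rewrite !ffunE subnn. Qed.

Lemma Nadd0 k : Nadd (Nzero k) (Nzero k) = Nzero k.
Proof. by apply/ffunP => i; rewrite !ffunE. Qed.

Lemma NsubnKC k (u v : Nk k) : Nle u v -> Nadd u (Nsub v u) = v.
Proof. by move=> /forallP le_uv; apply/ffunP => i; rewrite !ffunE subnKC. Qed.

Lemma Nneg0 l : Nneg (Nzero l) = Zzero l.
Proof. by apply/ffunP => i; rewrite !ffunE. Qed.

Lemma NtoZ0 l : NtoZ (Nzero l) = Zzero l.
Proof. by apply/ffunP => i; rewrite !ffunE. Qed.

Lemma Nneg_add l (m u : Nk l) : Nneg (Nadd m u) = Zadd (Nneg u) (Nneg m).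
Proof. by apply/ffunP => i; rewrite !ffunE PoszD GRing.opprD GRing.addrC. Qed.

Section KGraph.
Variables (k : nat) (L : kdata k).
Hypothesis HL : is_kgraph L.

Lemma deg0_rg (f : Mor L) : deg L f = Nzero k -> f = rg L f.
Proof.
have [_ [rgK scK compK _ _] [deg_rg _] UF] := HL.
move=> deg_f; have deg_f00 : deg L f = Nadd (Nzero k) (Nzero k) by rewrite Nadd0.
have [mn [_ uniq_mn]] := UF f _ _ deg_f00.
have e1 : (rg L f, f) = mn.
  by symmetry; apply: uniq_mn; split=> //=; [case: (rgK f) | case: (compK f)].
have e2 : (f, sc L f) = mn.
  symmetry; apply: uniq_mn; split=> //=; last by case: (compK f).
    by case: (scK f).
  by case: (scK f) => <- _; rewrite deg_rg.
by rewrite -e2 in e1; case: e1.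
Qed.

Lemma comp_cancel_l (f g g' : Mor L) :
  sc L f = rg L g -> sc L f = rg L g' -> deg L g = deg L g' ->
  Defs.comp L f g = Defs.comp L f g' -> g = g'.
Proof.
have [_ _ [_ deg_comp] UF] := HL.
move=> fg fg' deg_gg' comp_gg'.
have [mn [_ uniq_mn]] := UF (Defs.comp L f g) _ _ (deg_comp f g fg).
have e : (f, g) = mn by symmetry; apply: uniq_mn.
have e' : (f, g') = mn by symmetry; apply: uniq_mn; split; rewrite -?deg_gg'.
by rewrite -e' in e; case: e.
Qed.

End KGraph.

Lemma shift_inf_path j (G : kdata j) (q : Nk j) (x : ipath G) :
  is_inf_path x -> is_inf_path (shift q x).
Proof.
move=> Hx a b c le_ab le_bc.
have [deg_ab rg_ab sc_ab comp_abc] := Hx _ _ _ (Nle_add2l q le_ab) (Nle_add2l q le_bc).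
by rewrite /shift deg_ab Nsub_add2l.
Qed.

Lemma aut_inf_path j (G : kdata j) (phi : Mor G -> Mor G) (x : ipath G) :
  is_automorphism phi -> is_inf_path x -> is_inf_path (aut_inf phi x).
Proof.
move=> [_ phi_deg phi_rg phi_sc phi_comp] Hx a b c le_ab le_bc.
have [deg_ab rg_ab sc_ab comp_abc] := Hx _ _ _ le_ab le_bc.
have [_ rg_bc _ _] := Hx _ _ _ le_bc (Nle_refl c).
rewrite /aut_inf phi_deg -phi_rg -phi_sc deg_ab rg_ab sc_ab comp_abc phi_comp //.
by rewrite sc_ab rg_bc.
Qed.

Lemma shift_aut_inf j (G : kdata j) (phi : Mor G -> Mor G) (q : Nk j) (x : ipath G) :
  shift q (aut_inf phi x) = aut_inf phi (shift q x).
Proof. by []. Qed.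

Section SkewProduct.
Variables (k l : nat) (L : kdata k) (alpha : Zl l -> Mor L -> Mor L).
Hypotheses (HL : is_kgraph L) (Halpha : is_action alpha).

Lemma action0 (f : Mor L) : alpha (Zzero l) f = f.
Proof. by case: Halpha. Qed.

Lemma action_NtoZK (m : Nk l) (f : Mor L) : alpha (NtoZ m) (alpha (Nneg m) f) = f.
Proof.
case: Halpha => _ alpha0 alphaD; rewrite -alphaD -[RHS]alpha0.
by congr alpha; apply/ffunP => i; rewrite !ffunE GRing.subrr.
Qed.

Lemma action_NnegK (m : Nk l) (f : Mor L) : alpha (Nneg m) (alpha (NtoZ m) f) = f.
Proof.
case: Halpha => _ alpha0 alphaD; rewrite -alphaD -[RHS]alpha0.
by congr alpha; apply/ffunP => i; rewrite !ffunE GRing.addNr.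
Qed.

Variables (x : ipath L) (y : ipath (skew_prod alpha)).
Hypotheses (Hx : is_inf_path x) (Hxy : is_xinf x y).

Let O := Njoin (Nzero k) (Nzero l).

Lemma xinf_origin (b1 : Nk k) (b2 : Nk l) : y O (Njoin b1 b2) = (x (Nzero k) b1, b2).
Proof.
have [Hy y_x] := Hxy; set B1 := Njoin b1 (Nzero l).
have le_OB1 : Nle O B1 by apply: Nle_join; apply: Nle0.
have le_B1B : Nle B1 (Njoin b1 b2) by apply: Nle_join; [apply: Nle_refl | apply: Nle0].
have [_ _ sc_OB1 _] := Hy O B1 B1 le_OB1 (Nle_refl _).
have [deg_B1B rg_B1B _ _] := Hy B1 (Njoin b1 b2) (Njoin b1 b2) le_B1B (Nle_refl _).
have [_ _ _ comp_OB] := Hy O B1 (Njoin b1 b2) le_OB1 le_B1B.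
have le_OB : Nle O (Njoin b1 b2) by apply: Nle_join; apply: Nle0.
have [deg_OB _ _ _] := Hy O _ _ le_OB (Nle_refl _).
rewrite [LHS]surjective_pairing; congr pair; last first.
  by move: deg_OB; case: (y O _) => f n; rewrite /O !Nsub_join !Nsub0 => /Njoin_inj [].
rewrite comp_OB y_x /= NtoZ0 action0.
(* The [Lambda]-part of [y((b1,0),(b1,b2))] has degree 0, so it is the vertex [s(x(0,b1))]. *)
move: deg_B1B rg_B1B; case: (y B1 _) => g n /=.
rewrite Nsub_join Nsubnn => /Njoin_inj [/(deg0_rg HL) g_rg _].
rewrite -sc_OB1 y_x /= Nneg0 action0 => -[rg_g].
by rewrite g_rg rg_g; have [_ [_ _ compK _ _] _ _] := HL; case: (compK (x (Nzero k) b1)).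
Qed.

Lemma xinfE (a1 b1 : Nk k) (a2 b2 : Nk l) : Nle a1 b1 -> Nle a2 b2 ->
  y (Njoin a1 a2) (Njoin b1 b2) = (alpha (Nneg a2) (x a1 b1), Nsub b2 a2).
Proof.
move=> le1 le2; have [Hy _] := Hxy; set A := Njoin a1 a2; set B := Njoin b1 b2.
have le_OA : Nle O A by apply: Nle_join; apply: Nle0.
have le_AB : Nle A B by apply: Nle_join.
have [_ _ sc_OA _] := Hy O A A le_OA (Nle_refl _).
have [deg_AB rg_AB _ _] := Hy A B B le_AB (Nle_refl _).
have [_ _ _ comp_OAB] := Hy O A B le_OA le_AB.
move: comp_OAB deg_AB rg_AB; rewrite !xinf_origin -sc_OA xinf_origin.
case: (y A B) => g n [comp_g _] /=.
rewrite Nsub_join => /Njoin_inj [deg_g <-] [rg_g]; congr pair.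
rewrite -[g](action_NnegK a2); congr alpha.
have [alpha_aut _ _] := Halpha; have [_ phi_deg phi_rg _ _] := alpha_aut (NtoZ a2).
have [_ _ sc_0a comp_0ab] := Hx (Nle0 a1) le1.
have [deg_ab rg_ab _ _] := Hx le1 (Nle_refl b1).
apply: (comp_cancel_l HL (f := x (Nzero k) a1)).
- by rewrite -phi_rg rg_g action_NtoZK.
- by rewrite sc_0a rg_ab.
- by rewrite phi_deg deg_g deg_ab.
- by rewrite -comp_0ab.
Qed.

End SkewProduct.

Lemma shift_xinf k l (L : kdata k) (alpha : Zl l -> Mor L -> Mor L)
    (p : Nk k) (m : Nk l) (x : ipath L) (y z : ipath (skew_prod alpha)) :
  is_kgraph L -> is_action alpha -> is_inf_path x ->
  is_xinf x y -> is_xinf (aut_inf (alpha (Nneg m)) (shift p x)) z ->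
  ipeq (shift (Njoin p m) y) z.
Proof.
move=> HL Halpha Hx Hy Hz a b.
have [a1 [a2 ->]] := Njoin_split a; have [b1 [b2 ->]] := Njoin_split b.
case/Nle_joinE => le1 le2; rewrite /shift !Nadd_join.
have [aut _ alphaD] := Halpha.
have Hx' := aut_inf_path (aut (Nneg m)) (shift_inf_path p Hx).
rewrite (xinfE HL Halpha Hx Hy (Nle_add2l p le1) (Nle_add2l m le2)).
by rewrite (xinfE HL Halpha Hx' Hz le1 le2) Nsub_add2l Nneg_add alphaD.
Qed.

Theorem lemma4p5 (k l : nat) (L : kdata k) (alpha : Zl l -> Mor L -> Mor L)
  (HL : is_kgraph L) (Hrf : row_finite L) (Hns : no_sources L)
  (Halpha : is_action alpha)
  (x : ipath L) (Hx : is_inf_path x) (p : Nk k) (m : Nk l)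
  (y z w : ipath (skew_prod alpha)) :
  is_xinf x y ->
  is_xinf (aut_inf (alpha (Nneg m)) (shift p x)) z ->
  is_xinf (shift p (aut_inf (alpha (Nneg m)) x)) w ->
  [/\ ipeq (shift (Njoin p m) y) z,
      (forall x' : ipath L, is_inf_path x' ->
         ipeq (shift p (aut_inf (alpha (Nneg m)) x'))
              (aut_inf (alpha (Nneg m)) (shift p x')))
    & ipeq (shift (Njoin p m) y) w].
Proof.
rewrite shift_aut_inf => Hy Hz Hw; split.
- exact: shift_xinf Hz.
- by move=> x' _ a b _; rewrite shift_aut_inf.
- exact: shift_xinf Hw.
Qed.
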